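(* Let $G$ be a finite abelian group and let $\rho\ge4$ be an integer. If $A$ is a generating set for $G$ such that $\operatorname{diam}^+_A(G)\ge\rho$ and $|A|>\frac{3}{2\rho}|G|$, then there exist a subgroup $H\le G$ and an element $g\in G$ such that: (i) $A\subseteq H\cup(g+H)$ and $|A|>\left(2-\frac{\rho-3}{2\rho}\right)|H|$; (ii) $G/H$ is cyclic, $\rho+1\le|G/H|<\frac43\rho$, and $g+H$ generates $G/H$.
   Context: Groups are written additively. For $A\subseteq G$ let $A_0:=A\cup\{0\}$ and $\langle A\rangle^+_\rho:=\rho A_0=\{a_1+\dots+a_\rho:a_i\in A_0\}$. $\operatorname{diam}^+_A(G):=\min\{\rho\in\mathbb{N}_0:\langle A\rangle^+_\rho=G\}$ ($\min\varnothing=\infty$). *)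

(* Finite abelian groups are modelled as an abelian
   G : {group gT} in a finGroupType; the paper's additive notation
   (0, +, g + H) becomes multiplicative (1, *, g *: H). *)
From mathcomp Require Import all_boot all_fingroup all_solvable.
Set Implicit Arguments. Unset Strict Implicit. Unset Printing Implicit Defensive.
Import GroupScope.
Local Open Scope group_scope.

Definition A0 (gT : finGroupType) (A : {set gT}) : {set gT} := 1 |: A.

Fixpoint sumsetA (gT : finGroupType) (A : {set gT}) (rho : nat) : {set gT} :=
  match rho with
  | 0 => 1
  | r.+1 => sumsetA A r * A0 A
  end.

(* diam^+_A(G) >= rho, where diam^+_A(G) = min {k : <A>^+_k = G}, min ∅ = ∞ *)
Definition diam_ge (gT : finGroupType) (A G : {set gT}) (rho : nat) : Prop :=
  forall k : nat, sumsetA A k = G -> rho <= k.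

(* Let H be the stabilizer of S = (rho-1) A_0.  Iterating Kneser's theorem along
   A_0, 2 A_0, ..., (rho-1) A_0 (all of which have stabilizer H after adding H)
   gives (rho-1) |A_0 + H| <= |S| + (rho-2) |H|, and since S is H-periodic and
   not all of G, |S| <= |G| - |H|.  Writing |A_0 + H| = a |H| and |G| = q |H|
   this reads (rho-1) a + 2 <= q + rho - 1, while the density hypothesis gives
   3 q < 2 rho a.  Together they force a <= 2, and a = 1 is impossible because A
   generates G; so A_0 + H is the union of two cosets H and g + H, which yields
   every claim.  Kneser's theorem is proved by induction through Dyson
   e-transforms, glued together by the fact that a lower bound on
   |X| + |stab X| survives taking unions. *)

From mathcomp Require Import all_boot all_fingroup all_solvable zify.
Set Implicit Arguments. Unset Strict Implicit. Unset Printing Implicit Defensive.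

Lemma grid_core p q r c : 0 < r <= q -> 0 < c <= p -> (r < q) || (c < p) ->
  (p <= c * (q - r) + 1) || (q <= r * (p - c) + 1).
Proof.
move=> /andP[r0 rq] /andP[c0 cp] lt.
by have [le|le] := leqP (p - c) (q - r); apply/orP; [left|right]; nia.
Qed.

(* h1, h2 are the orders of two subgroups, d of their intersection and m of their
   product; s, t, i are the sizes of an h1-periodic set, an h2-periodic set and
   their intersection inside a single coset of the product. *)
Lemma grid_arith h1 h2 d i s t m : 0 < d -> d %| h1 -> d %| h2 ->
  h1 %| s -> h2 %| t -> i * h1 * h2 = s * t * d -> m * d = h1 * h2 ->
  h1 <= s -> s <= m -> h2 <= t -> t <= m -> (s < m) || (t < m) ->
  (h1 <= t - i + d) || (h2 <= s - i + d).
Proof.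
move=> d0 /dvdnP[p ->] /dvdnP[q ->] /dvdnP[r ->] /dvdnP[c ->] Ei Em.
have [-> | p0] := posnP p; first by rewrite !mul0n.
have [-> | q0] := posnP q; first by rewrite !mul0n orbT.
have -> : i = r * c * d.
  by apply/eqP; rewrite -(eqn_pmul2r (_ : 0 < p * d * (q * d))) ?muln_gt0 ?p0 ?q0 ?d0 //;
     apply/eqP; nia.
have -> : m = p * q * d by apply/eqP; rewrite -(eqn_pmul2r d0); apply/eqP; nia.
move=> rl ru cl cu lt.
have pd0 : 0 < p * d by nia.
have qd0 : 0 < q * d by nia.
have r1 : 0 < r <= q by apply/andP; split; nia.
have c1 : 0 < c <= p by apply/andP; split; nia.
have lt' : (r < q) || (c < p).
  by case/orP: lt => h; apply/orP; [left|right]; nia.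
by case/orP: (grid_core r1 c1 lt') => h; apply/orP; [left|right]; nia.
Qed.

Section PeriodicSets.
Local Open Scope group_scope.
Variable gT : finGroupType.
Implicit Types (K M : {group gT}) (R S T Z : {set gT}).

Lemma lcoset_sub_periodic K Z z : Z * K = Z -> z \in Z -> z *: K \subset Z.
Proof.
move=> ZK Zz; apply/subsetP=> y /lcosetP[k Kk ->].
by rewrite -ZK mem_mulg.
Qed.

Lemma periodicI K S T : S * K = S -> T * K = T -> (S :&: T) * K = S :&: T.
Proof.
move=> SK TK; apply/eqP; rewrite eqEsubset mulg_subl ?group1 // andbT subsetI.
by rewrite -{2}SK -{3}TK !mulSg ?subsetIl ?subsetIr.
Qed.

Lemma card_periodic_dvd K Z : Z * K = Z -> #|K| %| #|Z|.
Proof.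
move=> ZK; rewrite (@card_uniform_partition _ #|K| _ _ _ (preim_partitionP (lcoset K) Z)).
  exact: dvdn_mull.
move=> _ /imsetP[x Zx ->]; rewrite -(card_lcoset K x); apply: eq_card => y.
rewrite inE !lcosetE; apply/andP/idP=> [[_ /eqP ->] | xKy]; first exact: lcoset_refl.
by rewrite (subsetP (lcoset_sub_periodic ZK Zx)) // (lcoset_eqP xKy).
Qed.

Lemma sum_card_setI_lcoset K Z R : Z * K = Z ->
  \sum_(t in Z) #|R :&: t *: K| = (#|R :&: Z| * #|K|)%N.
Proof.
move=> ZK; have cardI X Y : #|X :&: Y| = \sum_(w in X) (w \in Y : nat).
  rewrite -sum1_card big_mkcond [RHS]big_mkcond; apply: eq_bigr => w _.
  by rewrite inE; case: (w \in X); case: (w \in Y).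
under eq_bigr => t _ do rewrite cardI.
rewrite exchange_big cardI big_distrl /=; apply: eq_bigr => w _.
under eq_bigr => t _ do rewrite lcoset_sym.
rewrite -cardI; case Zw: (w \in Z); rewrite ?mul1n ?mul0n.
  by rewrite (setIidPr (lcoset_sub_periodic ZK Zw)) card_lcoset.
apply/eqP; rewrite cards_eq0; apply/eqP/setP=> t; rewrite !inE.
apply/andP=> -[Zt wKt]; move: Zw; rewrite lcoset_sym in wKt.
by rewrite (subsetP (lcoset_sub_periodic ZK Zt)).
Qed.

Lemma card_lcosetI (H1 H2 : {group gT}) s t : s^-1 * t \in H1 * H2 ->
  #|s *: H1 :&: t *: H2| = #|H1 :&: H2|.
Proof.
case/mulsgP=> a b H1a H2b Est; have -> : t = s * (a * b) by rewrite -Est mulKVg.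
rewrite -(card_lcoset (H1 :&: H2) (s * a)); apply: eq_card => y.
rewrite !inE !mem_lcoset !invMg -!mulgA.
by rewrite inE (groupMl _ (groupVr H2b)) (groupMl _ (groupVr H1a)).
Qed.

Lemma card_grid (H1 H2 : {group gT}) M x S T : H1 * H2 = M ->
  S * H1 = S -> T * H2 = T -> S \subset x *: M -> T \subset x *: M ->
  (#|S :&: T| * #|H1| * #|H2| = #|S| * #|T| * #|H1 :&: H2|)%N.
Proof.
move=> defM SH1 TH2 sSxM sTxM.
rewrite setIC -(sum_card_setI_lcoset T SH1) big_distrl /= -mulnA -sum_nat_const.
apply: eq_bigr => s Ss; rewrite setIC -(sum_card_setI_lcoset (s *: H1) TH2).
rewrite -sum_nat_const; apply: eq_bigr => t Tt; apply: card_lcosetI; rewrite defM.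
have [xMs xMt] := (subsetP sSxM s Ss, subsetP sTxM t Tt).
rewrite mem_lcoset in xMs; rewrite mem_lcoset in xMt.
have -> : s^-1 * t = (x^-1 * s)^-1 * (x^-1 * t) by rewrite invMg invgK mulgA mulgK.
by rewrite groupM ?groupV.
Qed.

Lemma card_setD_cross (H1 H2 : {group gT}) M x S T : H1 * H2 = M ->
  S * H1 = S -> T * H2 = T -> x \in S :&: T -> ~~ (x *: M \subset S :&: T) ->
  (#|H1| <= #|T :\: S| + #|H1 :&: H2|) || (#|H2| <= #|S :\: T| + #|H1 :&: H2|).
Proof.
move=> defM SH1 TH2 /setIP[Sx Tx] not_sub.
have sH1M : H1 \subset M by rewrite -defM mulg_subl.
have sH2M : H2 \subset M by rewrite -defM mulg_subr.
set S' := S :&: x *: M; set T' := T :&: x *: M.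
have S'H1 : S' * H1 = S' by rewrite periodicI // -mulgA mulGSid.
have T'H2 : T' * H2 = T' by rewrite periodicI // -mulgA mulGSid.
have le_H1S' : #|H1| <= #|S'|.
  by rewrite -(card_lcoset H1 x) subset_leq_card // subsetI lcoset_sub_periodic ?lcosetS.
have le_H2T' : #|H2| <= #|T'|.
  by rewrite -(card_lcoset H2 x) subset_leq_card // subsetI lcoset_sub_periodic ?lcosetS.
have le_S'M : #|S'| <= #|M| by rewrite -(card_lcoset M x) subset_leq_card ?subsetIr.
have le_T'M : #|T'| <= #|M| by rewrite -(card_lcoset M x) subset_leq_card ?subsetIr.
have lt_M : (#|S'| < #|M|) || (#|T'| < #|M|).
  rewrite !ltn_neqAle le_S'M le_T'M !andbT -negb_and.
  apply: contra not_sub => /andP[/eqP eqS' /eqP eqT'].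
  have eS' : S' = x *: M by apply/eqP; rewrite eqEcard card_lcoset eqS' leqnn andbT subsetIr.
  have eT' : T' = x *: M by apply/eqP; rewrite eqEcard card_lcoset eqT' leqnn andbT subsetIr.
  by rewrite subsetI -{1}eS' -eT' !subsetIl.
have cardM : (#|M| * #|H1 :&: H2| = #|H1| * #|H2|)%N by rewrite mul_cardG defM.
have := grid_arith (cardG_gt0 _) (cardSg (subsetIl H1 H2)) (cardSg (subsetIr H1 H2))
  (card_periodic_dvd S'H1) (card_periodic_dvd T'H2)
  (card_grid defM S'H1 T'H2 (subsetIr _ _) (subsetIr _ _)) cardM
  le_H1S' le_S'M le_H2T' le_T'M lt_M.
have le_T'S' : #|T' :\: S'| <= #|T :\: S|.
  apply/subset_leq_card/subsetP=> y; rewrite !inE => /andP[nS'y /andP[Ty xMy]].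
  by rewrite Ty andbT; apply: contra nS'y => ->.
have le_S'T' : #|S' :\: T'| <= #|S :\: T|.
  apply/subset_leq_card/subsetP=> y; rewrite !inE => /andP[nT'y /andP[Sy xMy]].
  by rewrite Sy andbT; apply: contra nT'y => ->.
rewrite -cardsD setIC -cardsD.
by case/orP=> le; apply/orP; [left|right]; apply: leq_trans le _; rewrite leq_add2r.
Qed.

Lemma card_setD_saturated K M S T y : K \subset M -> T * K = T ->
  {in S :&: T, forall x, x *: M \subset S} -> y \in T :\: S -> #|K| <= #|T :\: S|.
Proof.
move=> sKM TK satM /setDP[Ty nSy]; rewrite -(card_lcoset K y).
apply/subset_leq_card/subsetP=> w yKw.
have Tw : w \in T by apply: subsetP yKw; apply: lcoset_sub_periodic.
rewrite inE Tw andbT; apply: contra nSy => Sw.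
have STw : w \in S :&: T by rewrite inE Sw Tw.
apply: (subsetP (satM w STw)).
by rewrite lcoset_sym in yKw; apply: subsetP yKw; rewrite lcosetS.
Qed.

Lemma card_setD_dichotomy (H1 H2 : {group gT}) M S T : H1 * H2 = M ->
  S * H1 = S -> T * H2 = T -> ~~ (S \subset T) -> ~~ (T \subset S) ->
  (#|H1| <= #|T :\: S| + #|H1 :&: H2|) || (#|H2| <= #|S :\: T| + #|H1 :&: H2|).
Proof.
move=> defM SH1 TH2 /subsetPn[z Sz nTz] /subsetPn[y Ty nSy].
have [/exists_inP[x STx not_sub] | /exists_inPn satM] :=
  boolP [exists x in S :&: T, ~~ (x *: M \subset S :&: T)].
  exact: card_setD_cross not_sub.
have sH1M : H1 \subset M by rewrite -defM mulg_subl.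
have sH2M : H2 \subset M by rewrite -defM mulg_subr.
have le_H2 : #|H2| <= #|T :\: S|.
  apply: (card_setD_saturated (y := y) sH2M TH2); last by rewrite inE nSy.
  by move=> x STx; have := satM x STx; rewrite negbK subsetI => /andP[].
have le_H1 : #|H1| <= #|S :\: T|.
  apply: (card_setD_saturated (y := z) sH1M SH1); last by rewrite inE nTz.
  by move=> x; rewrite setIC => STx; have := satM x STx; rewrite negbK subsetI => /andP[].
by apply/orP; case: (leqP #|H1| #|H2|) => le; [left|right]; lia.
Qed.
End PeriodicSets.

Section Stabilizer.
Local Open Scope group_scope.
Variables (gT : finGroupType) (G : {group gT}).
Hypothesis abG : abelian G.
Implicit Types (K : {group gT}) (X Y S T : {set gT}).

Lemma mulsgC X Y : X \subset G -> Y \subset G -> X * Y = Y * X.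
Proof. by move=> sXG sYG; apply/centC/(subset_trans sXG)/(subset_trans abG)/centS. Qed.

Definition stab X := [set g in G | X :* g == X].

Lemma group_set_stab X : group_set (stab X).
Proof.
apply/group_setP; split=> [|x y]; first by rewrite inE group1 rcoset1 /=.
rewrite !inE => /andP[Gx /eqP Xx] /andP[Gy /eqP Xy].
by rewrite groupM // rcosetM Xx Xy /=.
Qed.
Canonical stab_group X := Group (group_set_stab X).

Lemma stab_sub X : stab X \subset G.
Proof. by apply/subsetP=> x /setIdP[]. Qed.

Lemma mul_stab X : X * stab X = X.
Proof.
apply/eqP; rewrite eqEsubset mulg_subl ?group1 // andbT.
by apply/subsetP=> _ /mulsgP[x g Xx /setIdP[_ /eqP <-] ->]; rewrite mem_rcoset mulgK.
Qed.

Lemma mul_sub_stab K X : K \subset stab X -> X * K = X.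
Proof.
move=> sKstab; apply/eqP; rewrite eqEsubset mulg_subl ?group1 // andbT.
by rewrite -{2}(mul_stab X) mulgS.
Qed.

Lemma sub_stab K X : K \subset G -> X * K = X -> K \subset stab X.
Proof.
move=> sKG XK; apply/subsetP=> k Kk; rewrite inE (subsetP sKG) //=.
rewrite eqEcard card_rcoset leqnn andbT -{2}XK.
by apply/subsetP=> _ /rcosetP[x Xx ->]; apply: mem_mulg.
Qed.

Lemma stab_mulr X Y : Y \subset G -> stab X \subset stab (X * Y).
Proof.
move=> sYG; apply: sub_stab; first exact: stab_sub.
by rewrite -mulgA (mulsgC sYG (stab_sub X)) mulgA mul_stab.
Qed.

Lemma leq_card_stab_setU N S T :
  N <= #|S| + #|stab S| -> N <= #|T| + #|stab T| ->
  N <= #|S :|: T| + #|stab (S :|: T)|.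
Proof.
move=> leS leT.
have [sST | nsST] := boolP (S \subset T); first by rewrite (setUidPr sST).
have [sTS | nsTS] := boolP (T \subset S); first by rewrite (setUidPl sTS).
have le_D : #|stab S :&: stab T| <= #|stab (S :|: T)|.
  apply/subset_leq_card/sub_stab; first by rewrite subIset ?stab_sub.
  by rewrite mulUg !mul_sub_stab ?subsetIl ?subsetIr.
have M_group : group_set (stab S * stab T).
  by apply/comm_group_setP; rewrite /commute mulsgC ?stab_sub.
have cardU := cardsUI S T; have cardTS := cardsID S T; have cardST := cardsID T S.
rewrite setIC in cardTS.
have key : (#|stab S| <= #|T :\: S| + #|stab S :&: stab T|)
        || (#|stab T| <= #|S :\: T| + #|stab S :&: stab T|).
  exact: (@card_setD_dichotomy _ _ _ (Group M_group) _ _ erefl (mul_stab S) (mul_stab T) nsST nsTS).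
by case/orP: key => le; lia.
Qed.

End Stabilizer.

Section Kneser.
Local Open Scope group_scope.
Variables (gT : finGroupType) (G : {group gT}).
Hypothesis abG : abelian G.
Implicit Types (A B X Y : {set gT}).
Local Notation stab := (stab G).

Lemma card_dyson e A B : #|A :|: e *: B| + #|B :&: e^-1 *: A| = #|A| + #|B|.
Proof.
rewrite -(card_lcoset (B :&: e^-1 *: A) e) -(card_lcoset B e).
have -> : e *: (B :&: e^-1 *: A) = A :&: e *: B.
  by apply/setP=> y; rewrite mem_lcoset !inE !mem_lcoset invgK mulKVg andbC.
exact: cardsUI.
Qed.

Lemma dyson_mul_sub e A B : B \subset G ->
  (A :|: e *: B) * (B :&: e^-1 *: A) \subset A * B.
Proof.
move=> sBG; apply/subsetP=> _ /mulsgP[x y Ax /setIP[By eyA] ->].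
rewrite mem_lcoset invgK in eyA; case/setUP: Ax => [Ax | /lcosetP[b Bb ->]].
  exact: mem_mulg.
have cby : commute b y by apply: (centsP abG); apply: (subsetP sBG).
by rewrite -mulgA cby mulgA mem_mulg.
Qed.

Lemma exists_dyson_point A B b : A \subset G -> B \subset G -> b \in B ->
  ~~ (B \subset b *: stab (A * B)) -> exists2 a, a \in A & ~~ ((a * b^-1) *: B \subset A).
Proof.
move=> sAG sBG Bb nsub; apply/exists_inP; apply: contraR nsub => /exists_inPn shiftA.
apply/subsetP=> b' Bb'.
have Gbb' : b^-1 * b' \in G by rewrite groupM ?groupV ?(subsetP sBG).
suff : b^-1 * b' \in stab A by move/(subsetP (stab_mulr abG _ sBG)); rewrite mem_lcoset.
rewrite inE Gbb' eqEcard card_rcoset leqnn andbT.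
apply/subsetP=> _ /rcosetP[a Aa ->]; have := shiftA a Aa; rewrite negbK => /subsetP.
by apply; rewrite mulgA mem_lcoset mulKg.
Qed.

(* Decreases lexicographically in (|A B|, |B stab (A B)|); the second entry is at
   most |G|. *)
Definition kneser_measure A B := (#|(A * B)%g| * #|G|.+1 + #|(B * stab (A * B))%g|)%N.

Lemma kneser_measure_lt A B X Y : X * Y \subset A * B -> Y \subset G ->
  (X * Y = A * B -> #|Y * stab (A * B)| < #|B * stab (A * B)|) ->
  kneser_measure X Y < kneser_measure A B.
Proof.
move=> sXYAB sYG ltY; rewrite /kneser_measure.
have [ltXY | geXY] := ltnP #|X * Y| #|A * B|.
  apply: leq_trans (leq_addr _ _); apply: leq_trans (_ : #|(X * Y)%g|.+1 * #|G|.+1 <= _)%N.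
    rewrite mulSn addnC ltn_add2r ltnS subset_leq_card //.
    by rewrite mul_subG ?stab_sub.
  by rewrite leq_mul2r ltXY orbT.
have eXY : X * Y = A * B by apply/eqP; rewrite eqEcard sXYAB.
by rewrite eXY ltn_add2l ltY.
Qed.

Section PeriodicCase.
Variables A B : {set gT}.
Hypotheses (sAG : A \subset G) (sBG : B \subset G).
Hypotheses (AH : A * stab (A * B) = A) (BH : B * stab (A * B) = B).
Hypothesis IH : forall X Y, X \subset G -> Y \subset G -> X != set0 -> Y != set0 ->
  kneser_measure X Y < kneser_measure A B ->
  #|X| + #|Y| <= #|X * Y| + #|stab (X * Y)|.

Lemma dyson_transform_step a b : a \in A -> b \in B -> ~~ ((a * b^-1) *: B \subset A) ->
  exists2 F : {set gT}, F \subset A * B & A :* b \subset F /\ #|A| + #|B| <= #|F| + #|stab F|.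
Proof.
move=> Aa Bb nshift; set e := a * b^-1.
have Ge : e \in G by rewrite /e groupM ?groupV ?(subsetP sAG a) ?(subsetP sBG b).
have eAb : b \in e^-1 *: A by rewrite mem_lcoset invgK /e mulgKV.
have sBeG : B :&: e^-1 *: A \subset G by rewrite subIset ?sBG.
exists ((A :|: e *: B) * (B :&: e^-1 *: A)); first exact: dyson_mul_sub.
split; first by rewrite mulgSS ?subsetUl // sub1set inE Bb eAb.
rewrite -(card_dyson e); apply: IH => //.
- by rewrite subUset sAG mul_subG ?sub1set.
- by apply/set0Pn; exists a; rewrite inE Aa.
- by apply/set0Pn; exists b; rewrite inE Bb eAb.
apply: kneser_measure_lt => // [|_]; first exact: dyson_mul_sub.
have eAH : e^-1 *: A * stab (A * B) = e^-1 *: A by rewrite -mulgA AH.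
rewrite (periodicI BH eAH) BH; apply: proper_card.
rewrite properEneq subsetIl andbT; apply: contraNneq nshift => eqB.
by rewrite -(lcosetS e^-1) lcosetK -eqB subsetIr.
Qed.

Lemma kneser_periodic_step : A != set0 -> B != set0 ->
  #|A| + #|B| <= #|A * B| + #|stab (A * B)|.
Proof.
move=> nA /set0Pn[b0 Bb0].
have [/exists_inP[b Bb sBbH] | /exists_inPn nsub] :=
  boolP [exists b in B, B \subset b *: stab (A * B)].
  apply: leq_add; first by rewrite -(card_rcoset A b) subset_leq_card ?mulgS ?sub1set.
  by rewrite -(card_lcoset (stab (A * B)) b) subset_leq_card.
have step b : b \in B -> exists2 F : {set gT}, F \subset A * B &
    A :* b \subset F /\ #|A| + #|B| <= #|F| + #|stab F|.
  move=> Bb; have [a Aa nshift] := exists_dyson_point sAG sBG Bb (nsub b Bb).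
  exact: dyson_transform_step Aa Bb nshift.
have cover (s : seq gT) : {subset s <= B} -> exists2 W : {set gT}, W \subset A * B &
    {in s, forall b, A :* b \subset W} /\ #|A| + #|B| <= #|W| + #|stab W|.
  elim: s => [_ | b s IHs sbsB].
    by have [F sF [_ leF]] := step b0 Bb0; exists F.
  have Bb := sbsB b (mem_head b s).
  have sB : {subset s <= B} by move=> x sx; apply: sbsB; rewrite inE sx orbT.
  have [W sW [sAsW leW]] := IHs sB; have [F sF [sAbF leF]] := step b Bb.
  exists (W :|: F); first by rewrite subUset sW.
  split; last exact: leq_card_stab_setU.
  move=> b'; rewrite inE => /predU1P[-> | sb']; first by rewrite subsetU ?sAbF ?orbT.
  by rewrite subsetU ?sAsW.
have [b|W sW [sAbW leW]] := cover (enum B); first by rewrite mem_enum.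
suff -> : A * B = W by [].
apply/eqP; rewrite eqEsubset sW andbT; apply/subsetP=> _ /mulsgP[a b Aa Bb ->].
by apply: (subsetP (sAbW b _)); rewrite ?mem_enum // mem_rcoset mulgK.
Qed.

End PeriodicCase.

Theorem kneser A B : A \subset G -> B \subset G -> A != set0 -> B != set0 ->
  #|A| + #|B| <= #|A * B| + #|stab (A * B)|.
Proof.
have [n] := ubnP (kneser_measure A B); elim: n A B => // n IHn A B.
move=> lt_n sAG sBG nA nB; set H := stab (A * B).
have sHG : H \subset G := stab_sub _ _.
have HH : H * H = H := mulGid _.
have eC : A * H * (B * H) = A * B.
  by rewrite -mulgA (mulgA H) -(mulsgC abG sBG sHG) -!mulgA HH !mulgA mul_stab.
have AH : A * H * stab (A * H * (B * H)) = A * H by rewrite eC -mulgA HH.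
have BH : B * H * stab (A * H * (B * H)) = B * H by rewrite eC -mulgA HH.
have sAH : A \subset A * H := mulg_subl _ (group1 _).
have sBH : B \subset B * H := mulg_subl _ (group1 _).
have nonempty X Y : X \subset Y -> X != set0 -> Y != set0.
  by move=> sXY /set0Pn[x Xx]; apply/set0Pn; exists x; apply: (subsetP sXY).
have measureE : kneser_measure (A * H) (B * H) = kneser_measure A B.
  by rewrite /kneser_measure eC -mulgA HH.
have := @kneser_periodic_step (A * H) (B * H) (mul_subG sAG sHG) (mul_subG sBG sHG) AH BH.
rewrite eC measureE => le; apply: leq_trans (le _ (nonempty _ _ sAH nA) (nonempty _ _ sBH nB)).
  by apply: leq_add; apply: subset_leq_card.
by move=> X Y sXG sYG nX nY lt; apply: IHn => //; apply: leq_trans lt _; rewrite -ltnS.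
Qed.
End Kneser.

Section Sumsets.
Local Open Scope group_scope.
Variables (gT : finGroupType) (A : {set gT}).

Lemma mem1_sumsetA k : 1 \in sumsetA A k.
Proof. by elim: k => [|k IHk] /=; rewrite ?set11 // -(mulg1 1) mem_mulg ?setU11. Qed.

Lemma sumsetA_sub (G : {group gT}) k : A \subset G -> sumsetA A k \subset G.
Proof.
move=> sAG; elim: k => [|k IHk] /=; first exact: sub1G.
by rewrite mul_subG // subUset sub1G.
Qed.

Lemma sumsetAD j k : sumsetA A (j + k) = sumsetA A j * sumsetA A k.
Proof. by elim: k => [|k IHk]; rewrite ?addn0 ?mulg1 // addnS /= IHk mulgA. Qed.

End Sumsets.

Section Cosets.
Local Open Scope group_scope.
Variable gT : finGroupType.
Implicit Types (G H : {group gT}) (A Z : {set gT}).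

Lemma card_periodic_proper G H Z : Z * H = Z -> Z \subset G -> H \subset G -> Z != G ->
  #|Z| + #|H| <= #|G|.
Proof.
move=> ZH sZG sHG neZG.
have [y Gy nZy] : exists2 y, y \in G & y \notin Z.
  by apply/subsetPn; apply: contra neZG => sGZ; rewrite eqEsubset sZG.
have syHGZ : y *: H \subset G :\: Z.
  apply/subsetP=> _ /lcosetP[h Hh ->].
  have Gyh : y * h \in G := groupM Gy (subsetP sHG h Hh).
  rewrite inE Gyh andbT.
  by apply: contra nZy => Zyh; rewrite -(mulgK h y) -ZH mem_mulg ?groupV.
by rewrite -(card_lcoset H y) -(cardsID Z G) (setIidPr sZG) leq_add2l subset_leq_card.
Qed.

Lemma two_cosets H A : #|A0 A * H| = (2 * #|H|)%N ->
  exists2 g, g \in A & A \subset H :|: g *: H.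
Proof.
move=> cardAH; have H_gt0 := cardG_gt0 H.
have sHA0H : H \subset A0 A * H by rewrite mulg_subr // setU11.
have [g A0g nHg] : exists2 g, g \in A0 A & g \notin H.
  apply/subsetPn/negP=> sA0H; have : A0 A * H \subset H by rewrite -{2}(mulGid H) mulSg.
  by move/subset_leq_card; rewrite cardAH; lia.
have Ag : g \in A.
  by case/setU1P: A0g => [g1 | //]; rewrite g1 group1 in nHg.
exists g => //.
have disjH : H :&: g *: H = set0.
  apply/setP=> x; rewrite !inE mem_lcoset; apply/andP=> -[Hx gHx].
  have : x * (g^-1 * x)^-1 \in H by rewrite groupM ?groupV.
  by rewrite invMg invgK mulKVg (negbTE nHg).
have eqA0H : A0 A * H = H :|: g *: H.
  apply/eqP; rewrite eq_sym eqEcard subUset sHA0H mulSg ?sub1set //= cardAH.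
  by rewrite mul2n -addnn -{2}(card_lcoset H g) -cardsUI disjH cards0 addn0.
by rewrite -eqA0H (subset_trans _ (mulg_subl _ (group1 H))) ?subsetUr.
Qed.

Lemma quotient_cycle_two_cosets G H A g : G \subset 'N(H) -> <<A>> = G -> g \in G ->
  A \subset H :|: g *: H -> <[coset H g]> = G / H.
Proof.
move=> nHG genA Gg sA2H; apply/eqP; rewrite eqEsubset cycle_subG mem_quotient //=.
have nHA : A \subset 'N(H) by rewrite (subset_trans _ nHG) // -genA subset_gen.
rewrite -genA quotient_gen // gen_subG; apply/subsetP=> _ /morphimP[a _ Aa ->].
case/setUP: (subsetP sA2H a Aa) => [Ha | /lcosetP[h Hh ->]].
  by have -> : coset_morphism H a = 1 := coset_id Ha.
by have -> : coset_morphism H (g * h) = coset H g := coset_kerr g Hh; apply: cycle_id.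
Qed.
End Cosets.

Section SumsetChain.
Local Open Scope group_scope.
Variables (gT : finGroupType) (G : {group gT}) (A : {set gT}) (m : nat).
Hypotheses (abG : abelian G) (sAG : A \subset G).
Local Notation H := (stab_group G (sumsetA A m)).

Lemma stab_sumsetA_mul k : k <= m -> stab G (sumsetA A k * H) = H.
Proof.
move=> le_km; have sHG : H \subset G := stab_sub G _.
have sSG j : sumsetA A j \subset G := sumsetA_sub j sAG.
apply/eqP; rewrite eqEsubset sub_stab ?andbT //; last by rewrite -mulgA mulGid.
have eSm : sumsetA A k * H * sumsetA A (m - k) = sumsetA A m.
  by rewrite -mulgA (mulsgC abG sHG) // mulgA -sumsetAD subnKC // mul_stab.
by rewrite -{2}eSm stab_mulr.
Qed.

Lemma kneser_sumsetA k : 0 < k <= m ->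
  (k * #|(A0 A * H)%g| <= #|(sumsetA A k * H)%g| + k.-1 * #|H|)%N.
Proof.
have sHG : H \subset G := stab_sub G _.
have sA0G : A0 A \subset G by rewrite subUset sub1G.
have HH : H * H = H := mulGid H.
elim: k => // k IHk /andP[_ le_km].
case: k IHk le_km => [|k] IHk le_km; first by rewrite /= [1 * _]mul1g mul1n addn0.
have eXY : sumsetA A k.+1 * H * (A0 A * H) = sumsetA A k.+2 * H.
  by rewrite mulgA -(mulgA _ H) -(mulsgC abG sA0G sHG) mulgA -mulgA HH.
have nonempty (Z : {set gT}) : 1 \in Z -> Z * H != set0.
  by move=> Z1; apply/set0Pn; exists 1; rewrite -(mulg1 1) mem_mulg.
have := kneser abG (mul_subG (sumsetA_sub _ sAG) sHG) (mul_subG sA0G sHG)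
  (nonempty _ (mem1_sumsetA A k.+1)) (nonempty _ (setU11 _ _)).
rewrite eXY stab_sumsetA_mul // => le_XY.
move: le_XY (IHk (ltnW le_km)) => /=.
(* The cardinals carry different (convertible) finType instances, which lia
   would treat as distinct atoms. *)
by move: #|A0 A * H| #|H| #|sumsetA A k.+1 * H| #|sumsetA A k.+2 * H| => y h s1 s2; lia.
Qed.

End SumsetChain.

Lemma index_arith m a q : 3 <= m -> 1 < a -> m * a + 2 <= q + m ->
  3 * q < 2 * m.+1 * a -> [/\ a = 2, m.+2 <= q & 3 * q < 4 * m.+1].
Proof.
move=> m3 a2 le_q lt_q; have a_le2 : a <= 2 by nia.
have -> : a = 2 by apply/eqP; rewrite eqn_leq a_le2.
by split=> //; nia.
Qed.

Section Main.
Local Open Scope group_scope.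
Variables (gT : finGroupType) (G : {group gT}) (A : {set gT}) (rho : nat).
Hypotheses (abG : abelian G) (rho4 : 4 <= rho) (sAG : A \subset G) (genA : <<A>> = G).
Hypotheses (diamA : diam_ge A G rho) (denseA : (3 * #|G| < 2 * rho * #|A|)%N).
Local Notation H := (stab_group G (sumsetA A rho.-1)).

Let sHG : H \subset G := stab_sub G _.
Let rhoE : rho = rho.-1.+1. Proof. by rewrite prednK // (leq_trans _ rho4). Qed.
Let sA0H : A0 A \subset A0 A * H := mulg_subl _ (group1 H).

Lemma card_sumsetA_stab : #|sumsetA A rho.-1| + #|H| <= #|G|.
Proof.
apply: card_periodic_proper (mul_stab G _) (sumsetA_sub _ sAG) sHG _.
by apply/eqP=> /diamA; rewrite {1}rhoE ltnn.
Qed.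

Lemma card_stab_lt_A0_mul : #|H| < #|A0 A * H|.
Proof.
rewrite ltnNge; apply/negP=> le_A0H.
have eA0H : A0 A * H = H by apply/eqP; rewrite eq_sym eqEcard mulg_subr ?setU11.
have sGH : G \subset H by rewrite -genA gen_subG -eA0H (subset_trans _ sA0H) ?subsetUr.
have S_gt0 : 0 < #|sumsetA A rho.-1| by apply/card_gt0P; exists 1; apply: mem1_sumsetA.
by have := card_sumsetA_stab; have := subset_leq_card sGH; lia.
Qed.

Lemma stab_index_bounds :
  [/\ #|A0 A * H| = (2 * #|H|)%N, rho.+1 <= #|G : H| & 3 * #|G : H| < 4 * rho].
Proof.
have A0HH : A0 A * H * H = A0 A * H by rewrite -mulgA mulGid.
have [a cardA0H] := dvdnP (card_periodic_dvd A0HH).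
have cardG := Lagrange sHG.
have H_gt0 := cardG_gt0 H.
have m3 : 3 <= rho.-1 by rewrite -ltnS -rhoE.
have a_gt1 : 1 < a by rewrite -(ltn_pmul2r H_gt0) mul1n -cardA0H card_stab_lt_A0_mul.
have le_q : (rho.-1 * a + 2 <= #|G : H| + rho.-1)%N.
  rewrite -(leq_pmul2r H_gt0).
  have := @kneser_sumsetA _ _ _ rho.-1 abG sAG rho.-1.
  rewrite leqnn andbT mul_stab cardA0H => /(_ (leq_trans _ m3)).
  have := card_sumsetA_stab; rewrite -cardG.
  by move: #|sumsetA A rho.-1| #|H| H_gt0 => s h h0; move: m3; case: rho.-1 => // m; nia.
have lt_q : (3 * #|G : H| < 2 * rho.-1.+1 * a)%N.
  have le_A : #|A| <= a * #|H|.
    by rewrite -cardA0H subset_leq_card // (subset_trans _ sA0H) ?subsetUr.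
  by rewrite -(ltn_pmul2r H_gt0) -rhoE; move: denseA le_A; rewrite -cardG; nia.
have [a2 q_ge q_lt] := index_arith m3 a_gt1 le_q lt_q.
rewrite -rhoE in q_ge q_lt.
by rewrite cardA0H a2 mulnC.
Qed.
End Main.

Theorem theorem2p10 (gT : finGroupType) (G : {group gT}) (A : {set gT})
    (rho : nat) :
  abelian G -> 4 <= rho ->
  A \subset G -> <<A>>%g = G ->
  diam_ge A G rho ->
  3 * #|G| < 2 * rho * #|A| ->
  exists (H : {group gT}) (g : gT),
    [/\ H \subset G, g \in G,
        A \subset H :|: (g *: H)%g &
        (3 * rho + 3) * #|H| < 2 * rho * #|A|] /\
    [/\ cyclic (G / H)%g,
        rho.+1 <= #|(G / H)%g|,
        3 * #|(G / H)%g| < 4 * rho &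
        <[coset H g]>%g = (G / H)%g].
Proof.
move=> abG rho4 sAG genA diamA denseA.
have [cardA0H q_ge q_lt] := stab_index_bounds abG rho4 sAG genA diamA denseA.
set H := stab_group G (sumsetA A rho.-1) in cardA0H q_ge q_lt *.
have sHG : H \subset G := stab_sub G _.
have [g Ag sA2H] := two_cosets cardA0H.
have Gg : g \in G := subsetP sAG g Ag.
have cycGH := quotient_cycle_two_cosets (sub_abelian_norm abG sHG) genA Gg sA2H.
rewrite -(card_quotient (sub_abelian_norm abG sHG)) in q_ge q_lt.
exists H, g; split; split => //; last by apply/cyclicP; exists (coset H g).
apply: leq_ltn_trans denseA; rewrite -(Lagrange sHG) -(card_quotient (sub_abelian_norm abG sHG)).
by nia.
Qed.
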